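(* Let $F(\vec{\mathbf p},\mathbf q)$ be a disjunctive template, $y$ a basic variable, $\varphi(y)$ a Henkin formula, and $\vec\varphi$ a sequence of Henkin formulas none of which contains a free occurrence of $y$. For each $\psi\in[\![F(\vec\varphi,\varphi(y))]\!]$ there is $\theta\in[\![F(\vec\varphi,\forall y\varphi(y))]\!]$ such that $\vdash\forall y\psi\to\theta$.
   Context: Syntax of FOLPb: terms $t::=p_i\mid c\mid t\cdot t\mid t+t\mid !t\mid\mathsf b(t)\mid\mathsf{gen}_x(t)$; formulas $Px_1\dots x_n\mid\bot\mid\varphi\to\varphi\mid\forall x\varphi\mid t{:}_X\varphi$ ($X$ finite set of individual variables, $fv(t{:}_X\psi)=X$); $Xy=X\cup\{y\}$, $y\notin X$. Axioms: A1 classical first-order; A2 $t{:}_{Xy}\varphi\to t{:}_X\varphi$ ($y$ not free in $\varphi$); A3 $t{:}_X\varphi\to t{:}_{Xy}\varphi$; B1 $t{:}_X\varphi\to\varphi$; B2 $t{:}_X(\varphi\to\psi)\to(s{:}_X\varphi\to[t\cdot s]{:}_X\psi)$; B3 $t{:}_X\varphi\to[t+s]{:}_X\varphi$, $s{:}_X\varphi\to[t+s]{:}_X\varphi$; B4 $t{:}_X\varphi\to!t{:}_Xt{:}_X\varphi$; B5 $t{:}_X\varphi\to\mathsf{gen}_x(t){:}_X\forall x\varphi$ ($x\notin X$); Bb $\forall y\,t{:}_{Xy}\varphi(y)\to\mathsf b(t){:}_X\forall y\varphi(y)$; rules MP and generalization. Henkin language: $\mathbf V$ countable set of witness variables that may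 occur free (including in subscripts) but are never quantified nor $\mathsf{gen}$ subscripts; the original variables are basic variables; Henkin formulas $\mathit{Fml}_J(\mathbf V)$. Standing assumption: $\mathcal{CS}$ is a fixed variant closed and axiomatically appropriate constant specification for the basic language; $\mathcal{CS}(\mathbf V)$ is the set of all $c{:}\psi$ with $c{:}\varphi\in\mathcal{CS}$ and $\psi$ obtained by replacing some free basic variables of $\varphi$ with distinct witness variables; $\vdash$ denotes provability over $\mathit{Fml}_J(\mathbf V)$ with the axiom schemes and $\mathcal{CS}(\mathbf V)$. Templates: a template on distinct propositional letters is a propositional modal formula built with $\neg,\vee,\wedge,\Box$, each letter occurring at most once; disjunctive if its only Boolean connective is $\vee$. Instantiation sets for Henkin formulas $\vec\varphi$: $[\![\mathbf p_i]\!]=\{\varphi_i\}$; $[\![\neg G]\!]=\{\neg\psi:\psi\in[\![G]\!]\}$; $[\![G\vee H]\!]=\{\psi\vee\theta:\psi\in[\![G]\!],\theta\in[\![H]\!]\}$; $[\![G\wedge H]\!]$ likewise with $\wedge$; $[\![\Box G]\!]=\{t{:}_X\psi:\psi\in[\![G]\!], t$ any term, $X$ the set of witness variables in $\psi\}$ (all evaluated at $\vec\varphi$). *)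

From mathcomp Require Import all_boot.
Set Implicit Arguments. Unset Strict Implicit. Unset Printing Implicit Defensive.

(* Individual variables: (false, n) = basic variable x_n,
                         (true,  n) = witness variable w_n (from V).       *)
Definition var := (bool * nat)%type.
Definition BV (n : nat) : var := (false, n).
Definition WV (n : nat) : var := (true, n).
Definition is_wit (v : var) : bool := v.1.

(* Finite sets of variables, canonically represented as strictly sorted
   lists (so that equal sets are equal as Rocq values). *)
Definition vcode (v : var) : nat := (v.2).*2 + v.1.
Definition vlt (u v : var) : bool := vcode u < vcode v.
Definition vle (u v : var) : bool := vcode u <= vcode v.

Lemma vcode_inj : injective vcode.
Proof.
move=> [b1 n1] [b2 n2]; rewrite /vcode /= => E.
have Ho : odd (n1.*2 + b1) = odd (n2.*2 + b2) by rewrite E.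
rewrite !oddD !odd_double /= in Ho.
have Hb : b1 = b2 by move: Ho; clear E; case: b1; case: b2.
subst b2; move/addIn: E => /(congr1 half); rewrite !doubleK => ->; done.
Qed.

Lemma sort_undup_vlt (s : seq var) : sorted vlt (sort vle (undup s)).
Proof.
have H1 : sorted vle (sort vle (undup s)).
  by apply: sort_sorted => u v; rewrite /vle leq_total.
have H2 : uniq (sort vle (undup s)) by rewrite sort_uniq undup_uniq.
have : sorted ltn (map vcode (sort vle (undup s))).
  rewrite ltn_sorted_uniq_leq (map_inj_uniq vcode_inj) H2 /=.
  by rewrite sorted_map.
by rewrite sorted_map.
Qed.

Definition vset := {s : seq var | sorted vlt s}.
Definition mkvset (s : seq var) : vset := exist (fun l : seq var => is_true (sorted vlt l)) _ (sort_undup_vlt s).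
Definition vmem (v : var) (X : vset) : bool := v \in proj1_sig X.
Definition vset0 : vset := mkvset [::].
Definition vadd (y : var) (X : vset) : vset := mkvset (y :: proj1_sig X).
Definition vmap (f : var -> var) (X : vset) : vset := mkvset (map f (proj1_sig X)).

Inductive term : Type :=
  | TVar of nat
  | TConst of nat
  | TApp of term & term
  | TSum of term & term
  | TBang of term
  | Tb of term
  | TGen of nat & term.    (* gen_x(t), x = x_n basic *)

(* Henkin formulas Fml_J(V).  Quantifiers bind basic variables only.      *)
Inductive form : Type :=
  | FAtom of nat & seq var
  | FBot
  | FImp of form & form
  | FAll of nat & form
  | FJust of term & vset & form.

Definition FNeg (a : form) : form := FImp a FBot.
Definition FOr (a b : form) : form := FImp (FNeg a) b.
Definition FAnd (a b : form) : form := FNeg (FImp a (FNeg b)).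

Fixpoint fv (f : form) : seq var :=
  match f with
  | FAtom _ xs => xs
  | FBot => [::]
  | FImp a b => fv a ++ fv b
  | FAll x a => filter (predC1 (BV x)) (fv a)
  | FJust _ X _ => proj1_sig X
  end.

Fixpoint wvars (f : form) : seq var :=
  match f with
  | FAtom _ xs => filter is_wit xs
  | FBot => [::]
  | FImp a b => wvars a ++ wvars b
  | FAll _ a => wvars a
  | FJust _ X a => filter is_wit (proj1_sig X) ++ wvars a
  end.

Definition basic (f : form) : bool := wvars f == [::].

Fixpoint ssubst (s : var -> var) (f : form) : form :=
  match f with
  | FAtom P xs => FAtom P (map s xs)
  | FBot => FBot
  | FImp a b => FImp (ssubst s a) (ssubst s b)
  | FAll x a => FAll x (ssubst (fun v => if v == BV x then v else s v) a)
  | FJust t X a =>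
      FJust t (vmap s X) (ssubst (fun v => if v \in proj1_sig X then s v else v) a)
  end.

(* replacement of all occurrences of variables that are not bound by a
   quantifier (occurrences inside t:_X A are replaced, whether or not the
   variable is in X); used for CS(V) *)
Fixpoint rsubst (s : var -> var) (f : form) : form :=
  match f with
  | FAtom P xs => FAtom P (map s xs)
  | FBot => FBot
  | FImp a b => FImp (rsubst s a) (rsubst s b)
  | FAll x a => FAll x (rsubst (fun v => if v == BV x then v else s v) a)
  | FJust t X a => FJust t (vmap s X) (rsubst s a)
  end.

Definition sub1 (x y : var) : var -> var := fun v => if v == x then y else v.

(* y is free for x in f (no capture by a quantifier, nor by a subscript) *)
Fixpoint freefor (y x : var) (f : form) : bool :=
  match f with
  | FAtom _ _ | FBot => true
  | FImp a b => freefor y x a && freefor y x b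
  | FAll z a => (x \notin fv (FAll z a)) || ((BV z != y) && freefor y x a)
  | FJust _ X a =>
      (x \notin proj1_sig X) || (freefor y x a && ((y \in fv a) ==> (y \in proj1_sig X)))
  end.

Fixpoint tval (v : form -> bool) (f : form) : bool :=
  match f with
  | FBot => false
  | FImp a b => tval v a ==> tval v b
  | _ => v f
  end.
Definition taut (f : form) : Prop := forall v, tval v f.

Inductive is_axiom : form -> Prop :=
  | AxTaut f : taut f -> is_axiom f
  | AxInst x y a : freefor y (BV x) a ->
      is_axiom (FImp (FAll x a) (ssubst (sub1 (BV x) y) a))
  | AxAllImp x a b : BV x \notin fv a ->
      is_axiom (FImp (FAll x (FImp a b)) (FImp a (FAll x b)))
  | AxA2 t X y a : ~~ vmem y X -> y \notin fv a ->
      is_axiom (FImp (FJust t (vadd y X) a) (FJust t X a))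
  | AxA3 t X y a : ~~ vmem y X ->
      is_axiom (FImp (FJust t X a) (FJust t (vadd y X) a))
  | AxB1 t X a : is_axiom (FImp (FJust t X a) a)
  | AxB2 t s X a b :
      is_axiom (FImp (FJust t X (FImp a b)) (FImp (FJust s X a) (FJust (TApp t s) X b)))
  | AxB3l t s X a : is_axiom (FImp (FJust t X a) (FJust (TSum t s) X a))
  | AxB3r t s X a : is_axiom (FImp (FJust s X a) (FJust (TSum t s) X a))
  | AxB4 t X a : is_axiom (FImp (FJust t X a) (FJust (TBang t) X (FJust t X a)))
  | AxB5 t X x a : ~~ vmem (BV x) X ->
      is_axiom (FImp (FJust t X a) (FJust (TGen x t) X (FAll x a)))
  | AxBb t X y a : ~~ vmem (BV y) X ->
      is_axiom (FImp (FAll y (FJust t (vadd (BV y) X) a)) (FJust (Tb t) X (FAll y a))).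

(* Constant specifications: CS c A  means  c:A (= c:_{} A) is in CS. *)
Definition const_spec := nat -> form -> Prop.

Definition is_CS (CS : const_spec) : Prop :=
  forall c A, CS c A -> basic A /\ is_axiom A.

Definition axiomatically_appropriate (CS : const_spec) : Prop :=
  forall A, basic A -> is_axiom A -> exists c, CS c A.

Definition rvar (r : nat -> nat) (v : var) : var := if v.1 then v else BV (r v.2).
Fixpoint trename (r : nat -> nat) (t : term) : term :=
  match t with
  | TVar i => TVar i
  | TConst c => TConst c
  | TApp a b => TApp (trename r a) (trename r b)
  | TSum a b => TSum (trename r a) (trename r b)
  | TBang a => TBang (trename r a)
  | Tb a => Tb (trename r a)
  | TGen x a => TGen (r x) (trename r a)
  end.
Fixpoint rename (r : nat -> nat) (f : form) : form :=
  match f with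
  | FAtom P xs => FAtom P (map (rvar r) xs)
  | FBot => FBot
  | FImp a b => FImp (rename r a) (rename r b)
  | FAll x a => FAll (r x) (rename r a)
  | FJust t X a => FJust (trename r t) (vmap (rvar r) X) (rename r a)
  end.

Definition variant_closed (CS : const_spec) : Prop :=
  forall c A (r : nat -> nat), injective r -> CS c A -> CS c (rename r A).

Definition CSV (CS : const_spec) : const_spec := fun c B =>
  exists A (s : var -> var),
    CS c A /\
    (forall v, s v = v \/ (~~ is_wit v /\ is_wit (s v))) /\
    (forall u v, s u <> u -> s v <> v -> s u = s v -> u = v) /\
    B = rsubst s A.

Inductive prov (CS : const_spec) : form -> Prop :=
  | PAx A : is_axiom A -> prov CS A
  | PCS c A : CSV CS c A -> prov CS (FJust (TConst c) vset0 A)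
  | PMP a b : prov CS (FImp a b) -> prov CS a -> prov CS b
  | PGen x a : prov CS a -> prov CS (FAll x a).

(* Templates: letters Some i = p_i, None = q. *)
Inductive tmpl : Type :=
  | TmL of option nat
  | TmNeg of tmpl
  | TmOr of tmpl & tmpl
  | TmAnd of tmpl & tmpl
  | TmBox of tmpl.

Fixpoint tletters (F : tmpl) : seq (option nat) :=
  match F with
  | TmL l => [:: l]
  | TmNeg G | TmBox G => tletters G
  | TmOr G H | TmAnd G H => tletters G ++ tletters H
  end.

Definition is_template (F : tmpl) : bool := uniq (tletters F).

Fixpoint disjunctive (F : tmpl) : bool :=
  match F with
  | TmL _ => true
  | TmOr G H => disjunctive G && disjunctive H
  | TmBox G => disjunctive G
  | _ => false
  end.

Fixpoint inst (val : option nat -> form) (F : tmpl) : form -> Prop :=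
  match F with
  | TmL l => fun f => f = val l
  | TmNeg G => fun f => exists a, inst val G a /\ f = FNeg a
  | TmOr G H => fun f => exists a b, inst val G a /\ inst val H b /\ f = FOr a b
  | TmAnd G H => fun f => exists a b, inst val G a /\ inst val H b /\ f = FAnd a b
  | TmBox G => fun f => exists t a, inst val G a /\ f = FJust t (mkvset (wvars a)) a
  end.

Definition letval (phis : seq form) (q : form) (l : option nat) : form :=
  match l with Some i => nth FBot phis i | None => q end.

From Pilot Require Import Defs.
From mathcomp Require Import all_boot.
Set Implicit Arguments. Unset Strict Implicit. Unset Printing Implicit Defensive.

(* The proof is by induction on the disjunctive template F, with the extra
   invariant that theta and psi have the same witness variables:
   - letter p_i: theta := phi_i, which has no free y (instance axiom);
     letter q: theta := forall y phi;
   - disjunction G \/ H: q occurs in only one disjunct, whose instance we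
     treat by induction; the other instance has no free y, so forall y
     moves across the disjunction by classical logic;
   - box: from |- forall y psi -> theta, lifting gives a term k with
     |- k:_X (forall y psi -> theta), and the instance axiom, B5 and B2 give
     |- forall y t:_X psi -> [k . gen_y(t)]:_X theta.
   Lifting is the substantial part: axioms must be internalized by constants
   of CS(V).  An axiom with witness variables is made basic by renaming its
   witness variables to fresh basic ones; axiomatic appropriateness gives a
   constant for that basic axiom, and CS(V) substitutes the witnesses back.
   To avoid developing the substitution theory needed to show that every
   axiom scheme is closed under this renaming, all derivations are carried
   out in the sub-calculus [uprov] whose axioms are the seven schemes the
   argument uses; [uprov] is sound for [prov] and closed under lifting. *)

Lemma vlt_trans : transitive vlt.
Proof. by move=> a b c; apply: ltn_trans. Qed.

Lemma vlt_irr : irreflexive vlt.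
Proof. by move=> a; rewrite /vlt ltnn. Qed.

(* Sortedness is a boolean proof, so a variable set is its list. *)
Lemma vset_ext (X Y : vset) : proj1_sig X = proj1_sig Y -> X = Y.
Proof.
by case: X => x px; case: Y => y py /= E; subst; f_equal; apply: bool_irrelevance.
Qed.

Lemma mem_mkvset (l : seq var) (v : var) : (v \in proj1_sig (mkvset l)) = (v \in l).
Proof. by rewrite mem_sort mem_undup. Qed.

Lemma vset_eqi (X Y : vset) : proj1_sig X =i proj1_sig Y -> X = Y.
Proof.
move=> E; apply: vset_ext.
exact: (irr_sorted_eq vlt_trans vlt_irr (proj2_sig X) (proj2_sig Y)).
Qed.

Lemma mkvset_eqi (l1 l2 : seq var) : l1 =i l2 -> mkvset l1 = mkvset l2.
Proof. by move=> E; apply: vset_eqi => v; rewrite !mem_mkvset E. Qed.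

Lemma mkvset_id (X : vset) : mkvset (proj1_sig X) = X.
Proof. by apply: vset_eqi => v; rewrite mem_mkvset. Qed.

Lemma mem_vmap (f : var -> var) (X : vset) (v : var) :
  (v \in proj1_sig (vmap f X)) = (v \in map f (proj1_sig X)).
Proof. exact: mem_mkvset. Qed.

Lemma vmap_vadd (f : var -> var) (y : var) (X : vset) :
  vmap f (vadd y X) = vadd (f y) (vmap f X).
Proof.
apply: vset_eqi => v; rewrite mem_vmap !mem_mkvset inE mem_vmap.
rewrite -in_cons -map_cons; apply: eq_mem_map => u; exact: mem_mkvset.
Qed.

(* Substituting x for itself is the identity and never captures, so
   [forall x a -> a] is an instance axiom. *)

Lemma ssubst_id_fun (a : form) (f : var -> var) : f =1 id -> ssubst f a = a.
Proof.
elim: a f => [P xs||a IHa b IHb|x a IH|t X a IH] f Hf //=.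
- by rewrite (eq_map Hf) map_id.
- by rewrite IHa // IHb.
- by rewrite IH // => v; case: eqP => // _; apply: Hf.
- rewrite IH; last by move=> v; case: ifP => // _; apply: Hf.
  by rewrite /vmap (eq_map Hf) map_id mkvset_id.
Qed.

Lemma freefor_refl (z : var) (a : form) : freefor z z a.
Proof.
elim: a => [P xs||a IHa b IHb|x a IH|t X a IH] //=.
- by rewrite IHa IHb.
- case: (BV x =P z) => [<-|_]; last by rewrite IH orbT.
  by rewrite mem_filter /= eqxx.
- by case: (z \in proj1_sig X); rewrite ?orbT // IH implybT orbT.
Qed.

Lemma axiom_inst_self (x : nat) (a : form) : is_axiom (FImp (FAll x a) a).
Proof.
have E : ssubst (sub1 (BV x) (BV x)) a = a.
  by apply: ssubst_id_fun => v; rewrite /sub1; case: eqP => [->|].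
by have := AxInst (freefor_refl (BV x) a); rewrite E.
Qed.

Inductive used_axiom : form -> Prop :=
  | UTaut f : taut f -> used_axiom f
  | UInst x a : used_axiom (FImp (FAll x a) a)
  | UAllImp x a b : BV x \notin fv a ->
      used_axiom (FImp (FAll x (FImp a b)) (FImp a (FAll x b)))
  | UA3 t X y a : ~~ vmem y X -> used_axiom (FImp (FJust t X a) (FJust t (vadd y X) a))
  | UB2 t s X a b :
      used_axiom (FImp (FJust t X (FImp a b)) (FImp (FJust s X a) (FJust (TApp t s) X b)))
  | UB4 t X a : used_axiom (FImp (FJust t X a) (FJust (TBang t) X (FJust t X a)))
  | UB5 t X x a : ~~ vmem (BV x) X ->
      used_axiom (FImp (FJust t X a) (FJust (TGen x t) X (FAll x a))).

Lemma used_axiom_axiom (A : form) : used_axiom A -> is_axiom A.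
Proof.
case=> *; by [apply: AxTaut | apply: axiom_inst_self | apply: AxAllImp
  | apply: AxA3 | apply: AxB2 | apply: AxB4 | apply: AxB5].
Qed.

Inductive uprov (CS : const_spec) : form -> Prop :=
  | UPAx A : used_axiom A -> uprov CS A
  | UPCS c A : CSV CS c A -> uprov CS (FJust (TConst c) vset0 A)
  | UPMP a b : uprov CS (FImp a b) -> uprov CS a -> uprov CS b
  | UPGen x a : uprov CS a -> uprov CS (FAll x a).

Lemma uprov_prov (CS : const_spec) (A : form) : uprov CS A -> prov CS A.
Proof.
elim=> {A} [A /used_axiom_axiom|c A|a b _ H1 _ H2|x a _ H].
- exact: PAx.
- exact: PCS.
- exact: PMP H1 H2.
- exact: PGen.
Qed.

(* Renaming witness variables to fresh basic variables and back.
   [allvars a] lists every variable occurring in a, bound or not; if all of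
   them have index below N, witness w_n can be renamed to the basic x_(N+n)
   without clashes, and [basic_to_wit N] undoes this renaming. *)

Fixpoint allvars (f : form) : seq var :=
  match f with
  | FAtom _ xs => xs
  | FBot => [::]
  | FImp a b => allvars a ++ allvars b
  | FAll x a => BV x :: allvars a
  | FJust _ X a => proj1_sig X ++ allvars a
  end.

Definition vars_below (N : nat) (a : form) : Prop := forall v, v \in allvars a -> v.2 < N.

Definition fresh_bound (a : form) : nat := (\max_(v <- allvars a) v.2).+1.

Lemma vars_below_fresh (a : form) : vars_below (fresh_bound a) a.
Proof. by move=> v Hv; rewrite ltnS (leq_bigmax_seq _ Hv). Qed.

Definition wit_to_basic (N : nat) (v : var) : var :=
  if is_wit v then BV (N + v.2) else v.
Definition basic_to_wit (N : nat) (v : var) : var :=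
  if ~~ is_wit v && (N <= v.2) then WV (v.2 - N) else v.

Lemma wit_to_basicK (N : nat) (v : var) : v.2 < N -> basic_to_wit N (wit_to_basic N v) = v.
Proof.
case: v => [[] n] /= H; rewrite /wit_to_basic /basic_to_wit /=.
- by rewrite leq_addr addKn.
- by rewrite leqNgt H.
Qed.

Lemma wit_to_basic_not_wit (N : nat) (v : var) : ~~ is_wit (wit_to_basic N v).
Proof. by case: v => [[] n]. Qed.

Lemma wit_to_basic_inj (N : nat) (u v : var) :
  u.2 < N -> v.2 < N -> wit_to_basic N u = wit_to_basic N v -> u = v.
Proof. by move=> Hu Hv /(congr1 (basic_to_wit N)); rewrite !wit_to_basicK. Qed.

Lemma wit_to_basic_eq_BV (N : nat) (u : var) (x : nat) :
  x < N -> wit_to_basic N u = BV x -> u = BV x.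
Proof.
case: u => [[] n]; rewrite /wit_to_basic //= => Hx [E].
by move: Hx; rewrite -E ltnNge leq_addr.
Qed.

Lemma basic_to_wit_CSV (N : nat) :
  (forall v, basic_to_wit N v = v \/ (~~ is_wit v /\ is_wit (basic_to_wit N v))) /\
  (forall u v, basic_to_wit N u <> u -> basic_to_wit N v <> v ->
     basic_to_wit N u = basic_to_wit N v -> u = v).
Proof.
rewrite /basic_to_wit; split=> [[[] n]|[[] m] [[] n]] /=; try by [left | case | move=> _; case].
- by case: leqP => _; [right|left].
- case: leqP => Hm; case: leqP => Hn //= _ _; try by case.
  by case=> E; rewrite -(subnK Hm) -(subnK Hn) E.
Qed.

Lemma rsubst_ext (a : form) (f g : var -> var) : f =1 g -> rsubst f a = rsubst g a.
Proof.
elim: a f g => [P xs||a IHa b IHb|x a IH|t X a IH] f g E //=.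
- by rewrite (eq_map E).
- by rewrite (IHa _ _ E) (IHb _ _ E).
- by rewrite (IH _ (fun v => if v == BV x then v else g v)) // => v; rewrite E.
- by rewrite /vmap (eq_map E) (IH _ _ E).
Qed.

(* Both renamings fix the bound basic variables below N, so they commute
   with quantifiers. *)
Lemma wit_to_basic_upd (N x : nat) :
  (fun v => if v == BV x then v else wit_to_basic N v) =1 wit_to_basic N.
Proof. by move=> v; case: eqP => // ->. Qed.

Lemma basic_to_wit_upd (N x : nat) :
  x < N -> (fun v => if v == BV x then v else basic_to_wit N v) =1 basic_to_wit N.
Proof. by move=> H v; case: eqP => // ->; rewrite /basic_to_wit /= leqNgt H. Qed.

Lemma rename_witK (N : nat) (a : form) : vars_below N a ->
  rsubst (basic_to_wit N) (rsubst (wit_to_basic N) a) = a.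
Proof.
elim: a => [P xs||a IHa b IHb|x a IH|t X a IH] H //=.
- by rewrite -map_comp map_id_in // => v Hv; apply: wit_to_basicK (H _ Hv).
- by rewrite IHa ?IHb // => v Hv; apply: H; rewrite mem_cat Hv ?orbT.
- have Hx : x < N by apply: (H (BV x)); rewrite inE eqxx.
  rewrite (rsubst_ext _ (wit_to_basic_upd N x)) (rsubst_ext _ (basic_to_wit_upd Hx)).
  by rewrite IH // => v Hv; apply: H; rewrite inE Hv orbT.
- rewrite IH; last by move=> v Hv; apply: H; rewrite mem_cat Hv orbT.
  have HX u : u \in proj1_sig X -> u.2 < N by move=> Hu; apply: H; rewrite mem_cat Hu.
  congr FJust; apply: vset_eqi => v; rewrite mem_vmap.
  apply/mapP/idP => [[u /[!mem_vmap] /mapP [w Hw ->] ->]|Hv].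
  + by rewrite wit_to_basicK ?HX.
  + by exists (wit_to_basic N v); rewrite ?wit_to_basicK ?HX // mem_vmap map_f.
Qed.

Lemma wvars_rsubst_basic (a : form) (f : var -> var) :
  (forall v, ~~ is_wit (f v)) -> wvars (rsubst f a) = [::].
Proof.
have Hnil (s : seq var) g : (forall v, ~~ is_wit (g v)) -> filter is_wit (map g s) = [::].
  by move=> Hg; apply/eqP; rewrite -[_ == _]negbK -has_filter; apply/hasPn => _ /mapP [u _ ->].
elim: a f => [P xs||a IHa b IHb|x a IH|t X a IH] f Hf //=.
- exact: Hnil.
- by rewrite IHa // IHb.
- by apply: IH => v; case: eqP => // ->.
- rewrite IH // cats0; apply/eqP; rewrite -[_ == _]negbK -has_filter.
  by apply/hasPn => v; rewrite mem_vmap => /mapP [u _ ->].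
Qed.

Lemma fv_rsubst (a : form) (f : var -> var) (v : var) :
  v \in fv (rsubst f a) -> exists2 u, u \in fv a & f u = v.
Proof.
elim: a f v => [P xs||a IHa b IHb|x a IH|t X a IH] f v //=.
- by move/mapP => [u Hu ->]; exists u.
- by rewrite mem_cat => /orP [/IHa|/IHb] [u Hu E]; exists u; rewrite ?mem_cat ?Hu ?orbT.
- rewrite mem_filter => /andP [/= Hv /IH [u Hu]].
  case: eqP => [->|Hne] E; first by rewrite E eqxx in Hv.
  by exists u; rewrite // mem_filter /= Hu andbT; apply/eqP.
- by rewrite mem_vmap => /mapP [u Hu ->]; exists u.
Qed.

Lemma tval_rsubst (w : form -> bool) (f : var -> var) (a : form) :
  Defs.tval w (rsubst f a) = Defs.tval (fun g => w (rsubst f g)) a.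
Proof. by elim: a f => //= a IHa b IHb f; rewrite IHa IHb. Qed.

(* The used axiom schemes are closed under renaming witnesses to fresh basic
   variables; the side conditions survive because the renaming is injective
   on the variables of the formula and moves no basic variable. *)
Lemma used_axiom_rename (N : nat) (A : form) :
  used_axiom A -> vars_below N A -> used_axiom (rsubst (wit_to_basic N) A).
Proof.
case=> [f Hf|x a|x a b Hx|t X y a Hy|t s X a b|t X a|t X x a Hx] /= HN.
- by apply: UTaut => w; rewrite tval_rsubst; apply: Hf.
- by rewrite (rsubst_ext _ (wit_to_basic_upd N x)); apply: UInst.
- rewrite !(rsubst_ext _ (wit_to_basic_upd N x)); apply: UAllImp.
  have HxN : x < N by apply: (HN (BV x)); rewrite /= inE eqxx.
  apply/negP => /fv_rsubst [u Hu /(wit_to_basic_eq_BV HxN) E].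
  by move: Hx; rewrite -E Hu.
- rewrite vmap_vadd; apply: UA3; apply/negP; rewrite /vmem mem_vmap => /mapP [u Hu E].
  have HyN : y.2 < N.
    have Hy' : y \in proj1_sig (vadd y X) by rewrite mem_mkvset inE eqxx.
    by apply: HN; rewrite mem_cat; apply/orP; right; rewrite mem_cat Hy'.
  have HuN : u.2 < N by apply: HN; rewrite mem_cat; apply/orP; left; rewrite mem_cat Hu.
  by move: Hy; rewrite /vmem (wit_to_basic_inj HyN HuN E) Hu.
- exact: UB2.
- exact: UB4.
- rewrite !(rsubst_ext _ (wit_to_basic_upd N x)); apply: UB5.
  have HxN : x < N by apply: (HN (BV x)); rewrite /= !mem_cat inE eqxx !orbT.
  apply/negP; rewrite /vmem mem_vmap => /mapP [u Hu /esym /(wit_to_basic_eq_BV HxN) E].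
  by move: Hx; rewrite /vmem -E Hu.
Qed.

Lemma used_axiom_CSV (CS : const_spec) (A : form) :
  axiomatically_appropriate CS -> used_axiom A -> exists c, CSV CS c A.
Proof.
move=> Haa HA; set N := fresh_bound A.
have HN : vars_below N A by apply: vars_below_fresh.
have [c Hc] : exists c, CS c (rsubst (wit_to_basic N) A).
  apply: Haa; last by apply/used_axiom_axiom/used_axiom_rename.
  by rewrite /basic wvars_rsubst_basic // => v; apply: wit_to_basic_not_wit.
have [Hmove Hinj] := basic_to_wit_CSV N.
exists c, (rsubst (wit_to_basic N) A), (basic_to_wit N).
by rewrite rename_witK.
Qed.

(* A3 enlarges the subscript of an internalized formula to any set. *)
Lemma uprov_widen (CS : const_spec) (t : term) (A : form) (Z : vset) :
  uprov CS (FJust t vset0 A) -> uprov CS (FJust t Z A).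
Proof.
move=> H; rewrite -(mkvset_id Z); elim: (proj1_sig Z) => [//|a l IH].
case: (boolP (vmem a (mkvset l))) => Ha.
- rewrite (@mkvset_eqi (a :: l) l) // => v; rewrite inE; case: eqP => // ->.
  by move: Ha; rewrite /vmem mem_mkvset => ->.
- have -> : mkvset (a :: l) = vadd a (mkvset l).
    by apply: mkvset_eqi => v; rewrite !inE mem_mkvset.
  exact: UPMP (UPAx _ (UA3 t A Ha)) IH.
Qed.

(* Internalization: every derivable formula is justified by some term, with
   any subscript consisting of witness variables (so that B5 applies). *)
Lemma uprov_lift (CS : const_spec) (A : form) (Z : vset) :
  axiomatically_appropriate CS -> uprov CS A ->
  (forall v, v \in proj1_sig Z -> is_wit v) -> exists k, uprov CS (FJust k Z A).
Proof.
move=> Haa HA HZ; elim: HA => {A} [A HA|c A Hc|a b _ [k1 H1] _ [k2 H2]|x a _ [k Hk]].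
- have [c Hc] := used_axiom_CSV Haa HA.
  by exists (TConst c); apply/uprov_widen/UPCS.
- exists (TBang (TConst c)); apply: uprov_widen.
  exact: UPMP (UPAx _ (UB4 _ _ _)) (UPCS Hc).
- by exists (TApp k1 k2); apply: UPMP (UPMP (UPAx _ (UB2 _ _ _ _ _)) H1) H2.
- have Hx : ~~ vmem (BV x) Z by apply/negP => /HZ.
  by exists (TGen x k); apply: UPMP (UPAx _ (UB5 k a Hx)) Hk.
Qed.

Ltac solve_taut :=
  let w := fresh "w" in
  move=> w /=; repeat match goal with
  | |- context [Defs.tval w ?f] => case: (Defs.tval w f)
  | |- context [w ?f] => case: (w f)
  end.

Lemma uprov_taut_mp (CS : const_spec) (A B : form) :
  taut (FImp A B) -> uprov CS A -> uprov CS B.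
Proof. by move=> T; apply/UPMP/UPAx/UTaut. Qed.

Lemma uprov_taut_mp2 (CS : const_spec) (A B C : form) :
  taut (FImp A (FImp B C)) -> uprov CS A -> uprov CS B -> uprov CS C.
Proof. by move=> T HA; apply/UPMP/(uprov_taut_mp T). Qed.

Lemma uprov_trans (CS : const_spec) (A B C : form) :
  uprov CS (FImp A B) -> uprov CS (FImp B C) -> uprov CS (FImp A C).
Proof. by apply: uprov_taut_mp2; solve_taut. Qed.

Lemma uprov_all_K (CS : const_spec) (y : nat) (A B : form) :
  uprov CS (FImp (FAll y (FImp A B)) (FImp (FAll y A) (FAll y B))).
Proof.
set P := FAll y (FImp A B); set Q := FAll y A.
have HB : uprov CS (FImp (FAnd P Q) B).
  apply: (uprov_taut_mp2 _ (UPAx CS (UInst y (FImp A B))) (UPAx CS (UInst y A))).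
  by solve_taut.
have HyPQ : BV y \notin fv (FAnd P Q) by rewrite /= !mem_cat !mem_filter /= eqxx.
have := UPMP (UPAx CS (UAllImp B HyPQ)) (UPGen y HB).
by apply: uprov_taut_mp; solve_taut.
Qed.

Lemma uprov_all_mono (CS : const_spec) (y : nat) (A B : form) :
  uprov CS (FImp A B) -> uprov CS (FImp (FAll y A) (FAll y B)).
Proof. by move=> H; apply: UPMP (uprov_all_K CS y A B) (UPGen y H). Qed.

Lemma uprov_all_or_r (CS : const_spec) (y : nat) (a b t : form) :
  BV y \notin fv a -> uprov CS (FImp (FAll y b) t) ->
  uprov CS (FImp (FAll y (FOr a b)) (FOr a t)).
Proof.
move=> Hya Hb; have Hyna : BV y \notin fv (FNeg a) by rewrite /= cats0.
apply: uprov_trans (UPAx CS (UAllImp b Hyna)) _.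
by apply: uprov_taut_mp Hb; solve_taut.
Qed.

Lemma uprov_all_or_l (CS : const_spec) (y : nat) (a b t : form) :
  BV y \notin fv b -> uprov CS (FImp (FAll y a) t) ->
  uprov CS (FImp (FAll y (FOr a b)) (FOr t b)).
Proof.
move=> Hyb Ha; have Hcomm (P Q : form) : uprov CS (FImp (FOr P Q) (FOr Q P)).
  by apply/UPAx/UTaut; solve_taut.
apply: uprov_trans (uprov_all_mono y (Hcomm a b)) _.
exact: uprov_trans (uprov_all_or_r Hyb Ha) (Hcomm b t).
Qed.

(* forall y moves under a justification whose subscript X consists of witness
   variables: lifting, then B5 and B2. *)
Lemma uprov_all_just (CS : const_spec) (y : nat) (r : term) (X : vset) (a t : form) :
  axiomatically_appropriate CS -> (forall v, v \in proj1_sig X -> is_wit v) ->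
  uprov CS (FImp (FAll y a) t) ->
  exists s, uprov CS (FImp (FAll y (FJust r X a)) (FJust s X t)).
Proof.
move=> Haa HX Ha; have [k Hk] := uprov_lift Haa Ha HX.
have HyX : ~~ vmem (BV y) X by apply/negP => /HX.
exists (TApp k (TGen y r)).
apply: uprov_trans (UPAx CS (UInst y (FJust r X a))) _.
apply: uprov_trans (UPAx CS (UB5 r a HyX)) _.
exact: UPMP (UPAx CS (UB2 k (TGen y r) X (FAll y a) t)) Hk.
Qed.

Lemma inst_no_q (phis : seq form) (q1 q2 : form) (F : tmpl) (f : form) :
  None \notin tletters F -> inst (letval phis q1) F f -> inst (letval phis q2) F f.
Proof.
elim: F f => [l|G IH|G IHG H IHH|G IHG H IHH|G IH] f /=.
- by case: l.
- by move=> Hn [a [Ha ->]]; exists a; split => //; apply: IH.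
- rewrite mem_cat negb_or => /andP [HG HH] [a [b [Ha [Hb ->]]]].
  by exists a, b; split; [apply: IHG|split; [apply: IHH|]].
- rewrite mem_cat negb_or => /andP [HG HH] [a [b [Ha [Hb ->]]]].
  by exists a, b; split; [apply: IHG|split; [apply: IHH|]].
- by move=> Hn [t [a [Ha ->]]]; exists t, a; split => //; apply: IH.
Qed.

Lemma wvars_wit (a : form) (v : var) : v \in wvars a -> is_wit v.
Proof.
elim: a => [P xs||a IHa b IHb|x a IH|t X a IH] //=.
- by rewrite mem_filter => /andP [].
- by rewrite mem_cat => /orP [/IHa|/IHb].
- by rewrite mem_cat mem_filter => /orP [/andP []|/IH].
Qed.

(* Without the letter q, instances have no free y when the phi_i have none;
   a box contributes only witness variables. *)
Lemma inst_no_q_fv (phis : seq form) (q : form) (y : nat) (F : tmpl) (f : form) :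
  None \notin tletters F -> (forall i, BV y \notin fv (nth FBot phis i)) ->
  inst (letval phis q) F f -> BV y \notin fv f.
Proof.
move=> Hn Hy; elim: F f Hn => [l|G IH|G IHG H IHH|G IHG H IHH|G IH] f /=.
- by case: l => // i _ ->; apply: Hy.
- by move=> Hn [a [Ha ->]]; rewrite /= cats0; apply: IH.
- rewrite mem_cat negb_or => /andP [HG HH] [a [b [Ha [Hb ->]]]].
  by rewrite /= !mem_cat /= (negbTE (IHG a HG Ha)) (negbTE (IHH b HH Hb)).
- rewrite mem_cat negb_or => /andP [HG HH] [a [b [Ha [Hb ->]]]].
  by rewrite /= !mem_cat /= (negbTE (IHG a HG Ha)) (negbTE (IHH b HH Hb)).
- by move=> Hn [t [a [Ha ->]]]; rewrite /= mem_mkvset; apply/negP => /wvars_wit.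
Qed.

(* The quantifier shift, by induction on the template, in [uprov] and with
   equal witness variables on both sides (needed for the box case). *)
Lemma quantifier_shift (CS : const_spec) (y : nat) (phi : form) (phis : seq form) :
  axiomatically_appropriate CS -> (forall i, BV y \notin fv (nth FBot phis i)) ->
  forall F, is_template F -> disjunctive F -> forall psi, inst (letval phis phi) F psi ->
  exists theta, [/\ inst (letval phis (FAll y phi)) F theta,
                    uprov CS (FImp (FAll y psi) theta) & wvars theta =i wvars psi].
Proof.
move=> Haa Hy; elim=> [[i|]|G IH|G IHG H IHH|G IHG H IHH|G IH] //= HF Hd psi.
- by move=> ->; exists (nth FBot phis i); split=> //; apply/UPAx/UInst.
- by move=> ->; exists (FAll y phi); split=> //; apply/UPAx/UTaut; solve_taut.
- move: HF Hd; rewrite /is_template /= cat_uniq => /and3P [UG Hdisj UH] /andP [DG DH].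
  case=> a [b [Ha [Hb ->]]].
  have [HqG|HqG] := boolP (None \in tletters G).
  + have HqH : None \notin tletters H by apply: contra Hdisj => HqH; apply/hasP; exists None.
    have [t [It Pt Wt]] := IHG UG DG a Ha.
    exists (FOr t b); split; last by move=> v; rewrite /= !mem_cat Wt.
    * by exists t, b; split; [|split; [apply: inst_no_q Hb|]].
    * exact: uprov_all_or_l (inst_no_q_fv HqH Hy Hb) Pt.
  + have [t [It Pt Wt]] := IHH UH DH b Hb.
    exists (FOr a t); split; last by move=> v; rewrite /= !mem_cat Wt.
    * by exists a, t; split; [apply: inst_no_q Ha|split].
    * exact: uprov_all_or_r (inst_no_q_fv HqG Hy Ha) Pt.
- case=> r [a [Ha ->]]; have [t [It Pt Wt]] := IH HF Hd a Ha.
  have HX v : v \in proj1_sig (mkvset (wvars a)) -> is_wit v.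
    by rewrite mem_mkvset => /wvars_wit.
  have [s Ps] := uprov_all_just r Haa HX Pt.
  exists (FJust s (mkvset (wvars a)) t); split; last by move=> v; rewrite /= !mem_cat Wt.
  + by exists s, t; rewrite (mkvset_eqi Wt).
  + exact: Ps.
Qed.

Theorem mainTheorem13 (CS : const_spec)
  (HCS : is_CS CS) (Hvc : variant_closed CS) (Haa : axiomatically_appropriate CS)
  (F : tmpl) (HF : is_template F) (Hdisj : disjunctive F)
  (y : nat) (phi : form) (phis : seq form)
  (Hlet : forall i, Some i \in tletters F -> i < size phis)
  (Hy : forall i, i < size phis -> BV y \notin fv (nth FBot phis i)) :
  forall psi, inst (letval phis phi) F psi ->
    exists theta, inst (letval phis (FAll y phi)) F theta /\
                  prov CS (FImp (FAll y psi) theta).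
Proof.
move=> psi Hpsi.
have Hy_all i : BV y \notin fv (nth FBot phis i).
  by case: (ltnP i (size phis)) => Hi; [apply: Hy | rewrite nth_default].
have [theta [Itheta Ptheta _]] := quantifier_shift Haa Hy_all HF Hdisj Hpsi.
by exists theta; split=> //; apply: uprov_prov.
Qed.
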